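(* Let $D\in\operatorname{Div}(G)$, fix $q\in V(G)$, and define the divisor $D'$ by $[D']=[D]-Q\lfloor L_{(q)}[D]\rfloor$, where $\lfloor\cdot\rfloor$ is the coordinatewise floor. Then $D'\sim D$ and $|D'(v)|<\deg(v)$ for every vertex $v\ne q$.
   Context: $G$ is a finite connected multigraph without loop edges, with vertex set $V(G)=\{v_1,\dots,v_n\}$ and edge set $E(G)$. A divisor is an element $D=\sum_v D(v)(v)$ of the free abelian group $\operatorname{Div}(G)$ on $V(G)$, identified with the integer column vector $[D]$. $Q$ is the Laplacian matrix ($q_{ii}=\deg(v_i)$, and for $i\ne j$, $-q_{ij}$ is the number of edges between $v_i$ and $v_j$). $D_1\sim D_2$ means $[D_1]-[D_2]=Q\mathbf{f}$ for some integer vector $\mathbf{f}$. For $q=v_i$, $Q_i$ is the invertible matrix obtained from $Q$ by deleting the $i$-th row and column, and $L_{(q)}$ is the $n\times n$ matrix obtained from $Q_i^{-1}$ by inserting a zero row and a zero column in position $i$; it satisfies $QL_{(q)}=I+R$, where $R$ has all entries $-1$ in row $i$ and zeros elsewhere. *)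

From HB Require Import structures.
From mathcomp Require Import all_boot all_order all_algebra.
Set Implicit Arguments. Unset Strict Implicit. Unset Printing Implicit Defensive.
Import Order.TTheory GRing.Theory Num.Theory.
Local Open Scope ring_scope.

(* A finite multigraph on the vertex set 'I_n.+1 (there is at least one
   vertex since q is a vertex) is given by an edge-multiplicity function
   m : 'I_n.+1 -> 'I_n.+1 -> nat (m i j = number of edges between i and j). *)

Definition loopless (n : nat) (m : 'I_n -> 'I_n -> nat) : Prop :=
  forall i, m i i = 0%N.

Definition symmetric_mult (n : nat) (m : 'I_n -> 'I_n -> nat) : Prop :=
  forall i j, m i j = m j i.

Definition adj (n : nat) (m : 'I_n -> 'I_n -> nat) : rel 'I_n :=
  fun i j => (0 < m i j)%N.

Definition connected_mg (n : nat) (m : 'I_n -> 'I_n -> nat) : Prop :=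
  forall i j, connect (adj m) i j.

Definition deg (n : nat) (m : 'I_n -> 'I_n -> nat) (v : 'I_n) : nat :=
  (\sum_(j < n) m v j)%N.

Definition laplacian (n : nat) (m : 'I_n -> 'I_n -> nat) : 'M[int]_n :=
  \matrix_(i, j) (if i == j then (deg m i)%:Z else - (m i j)%:Z).

(* divisors are integer column vectors; linear equivalence *)
Definition lin_equiv (n : nat) (m : 'I_n -> 'I_n -> nat)
  (D1 D2 : 'cV[int]_n) : Prop :=
  exists f : 'cV[int]_n, D1 - D2 = laplacian m *m f.

Definition reduced_laplacian (n : nat) (m : 'I_n.+1 -> 'I_n.+1 -> nat)
  (q : 'I_n.+1) : 'M[rat]_n :=
  map_mx (fun z : int => z%:~R) (row' q (col' q (laplacian m))).

(* L_(q): inverse of Q_q with a zero row and column inserted at q *)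
Definition Lq (n : nat) (m : 'I_n.+1 -> 'I_n.+1 -> nat) (q : 'I_n.+1)
  : 'M[rat]_n.+1 :=
  \matrix_(i, j)
    match unlift q i, unlift q j with
    | Some i', Some j' => invmx (reduced_laplacian m q) i' j'
    | _, _ => 0
    end.

Definition floor_cV (n : nat) (v : 'cV[rat]_n) : 'cV[int]_n :=
  map_mx (fun x : rat => Num.floor x) v.

Definition reduce_div (n : nat) (m : 'I_n.+1 -> 'I_n.+1 -> nat)
  (q : 'I_n.+1) (D : 'cV[int]_n.+1) : 'cV[int]_n.+1 :=
  D - laplacian m *m floor_cV (Lq m q *m map_mx (fun z : int => z%:~R) D).

From HB Require Import structures.
From mathcomp Require Import all_boot all_order all_algebra.
From mathcomp Require Import lra.
Set Implicit Arguments. Unset Strict Implicit. Unset Printing Implicit Defensive.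
Import Order.TTheory GRing.Theory Num.Theory.
Local Open Scope ring_scope.

(* Let x = L_(q)[D] and write x = floor(x) + z with 0 <= z_k < 1.  Since
   Q L_(q) = I + R, the vertices v <> q satisfy (Q x)_v = D_v, hence
   D'_v = D_v - (Q floor(x))_v = (Q z)_v = \sum_k m_vk (z_v - z_k).  Every
   |z_v - z_k| < 1 and v has a neighbour (the graph is connected and v <> q),
   so |D'_v| < \sum_k m_vk = deg v. *)

Lemma exists_neighbour (n : nat) (m : 'I_n -> 'I_n -> nat)
  (Hconn : connected_mg m) (q v : 'I_n) :
  v != q -> exists k, (0 < m v k)%N.
Proof.
have /connectP [[|k p] /= path_vq last_q] := Hconn v q.
  by rewrite last_q eqxx.
by case/andP: path_vq => adj_vk _; exists k.
Qed.

Section LaplacianOverOrderedRing.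
Variables (R : realDomainType) (n : nat) (m : 'I_n -> 'I_n -> nat).
Hypothesis Hloop : loopless m.

Definition laplacianR : 'M[R]_n := map_mx (fun z : int => z%:~R) (laplacian m).

(* Row formula: (Q z)_i = \sum_k m_ik (z_i - z_k); it only uses that the
   diagonal entry deg i is the row sum of the multiplicities. *)
Lemma laplacianR_mulE (z : 'cV[R]_n) i :
  (laplacianR *m z) i 0 = \sum_k (m i k)%:R * (z i 0 - z k 0).
Proof.
rewrite mxE (bigD1 i) //= [RHS](bigD1 i) //= Hloop subrr mulr0 add0r.
rewrite !mxE eqxx /deg (bigD1 i) //= Hloop add0n sumMz mulr_suml -big_split.
apply: eq_bigr => k neq_ki; rewrite !mxE eq_sym (negbTE neq_ki).
by rewrite mulrBr intrN mulNr.
Qed.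

Definition harmonic_at (z : 'cV[R]_n) (v : 'I_n) : Prop := (laplacianR *m z) v 0 = 0.

Lemma harmonic_max_spreads (z : 'cV[R]_n) x y :
  harmonic_at z x -> (forall k, z k 0 <= z x 0) -> adj m x y -> z y 0 = z x 0.
Proof.
rewrite /harmonic_at laplacianR_mulE => harm_x max_x adj_xy.
have terms_ge0 k : xpredT k -> 0 <= (m x k)%:R * (z x 0 - z k 0).
  by move=> _; rewrite mulr_ge0 ?subr_ge0.
move: (@psumr_eq0P _ _ xpredT _ terms_ge0 harm_x y isT) => /eqP.
rewrite mulf_eq0 pnatr_eq0 subr_eq0 eqn0Ngt -/(adj m x y) adj_xy /= => /eqP -> //.
Qed.

Hypothesis Hconn : connected_mg m.

Lemma harmonic_nonpos (q : 'I_n) (z : 'cV[R]_n) :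
  z q 0 = 0 -> (forall v, v != q -> harmonic_at z v) -> forall v, z v 0 <= 0.
Proof.
move=> zq0 harm v; rewrite leNgt; apply/negP => zv_gt0.
have [u _ max_u] := @arg_maxP _ _ _ q xpredT (fun k => z k 0) isT.
have zu_gt0 : 0 < z u 0 by apply: lt_le_trans zv_gt0 (max_u v isT).
have max_path p x : path (adj m) x p -> z x 0 = z u 0 -> z (last x p) 0 = z u 0.
  elim: p x => [|y p IHp] x //= /andP [adj_xy path_y] zx.
  apply: IHp path_y _; rewrite -zx; apply: harmonic_max_spreads adj_xy.
  - by apply: harm; apply: contraTneq zu_gt0 => x_q; rewrite -zx x_q zq0 ltxx.
  - by move=> k; rewrite zx; apply: max_u.
have /connectP [p path_uq last_q] := Hconn u q.
by move: zu_gt0; rewrite -(max_path p u path_uq erefl) -last_q zq0 ltxx.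
Qed.

Lemma harmonic_eq0 (q : 'I_n) (z : 'cV[R]_n) :
  z q 0 = 0 -> (forall v, v != q -> harmonic_at z v) -> z = 0.
Proof.
move=> zq0 harm; have le0 := harmonic_nonpos zq0 harm.
have ge0 : forall v, (- z) v 0 <= 0.
  apply: (harmonic_nonpos (q := q)) => [|v vq]; first by rewrite mxE zq0 oppr0.
  by rewrite /harmonic_at mulmxN mxE (harm v vq) oppr0.
apply/matrixP => v k; rewrite (ord1 k) mxE; apply/eqP.
by move: (ge0 v); rewrite mxE oppr_le0 eq_le le0 => ->.
Qed.

End LaplacianOverOrderedRing.
Arguments laplacianR {R n} m.

(* If all entries of z lie in [0,1) and v has a neighbour, then
   |(Q z)_v| < deg v, since each |z_v - z_k| < 1. *)
Lemma laplacianR_norm_lt (R : realDomainType) (n : nat)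
  (m : 'I_n -> 'I_n -> nat) (Hloop : loopless m) (z : 'cV[R]_n) (v : 'I_n) :
  (forall k, 0 <= z k 0 < 1) -> (exists k, (0 < m v k)%N) ->
  `|(laplacianR m *m z) v 0| < (deg m v)%:R.
Proof.
move=> z_itv [k0 adj_vk0].
have diff_lt1 k : `|z v 0 - z k 0| < 1.
  move: (z_itv k) (z_itv v) => /andP [? ?] /andP [? ?].
  by rewrite ltr_norml; apply/andP; split; lra.
rewrite laplacianR_mulE // /deg natr_sum.
apply: le_lt_trans (ler_norm_sum _ _ _) _.
rewrite (bigD1 k0) //= [X in _ < X](bigD1 k0) //=; apply: ltr_leD.
  by rewrite normrM normr_nat -[X in _ < X]mulr1 ltr_pM2l ?ltr0n.
apply: ler_sum => k _; rewrite normrM normr_nat -[X in _ <= X]mulr1.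
by apply: ler_wpM2l; [exact: ler0n | exact: ltW].
Qed.

Section ReducedLaplacian.
Variables (n : nat) (m : 'I_n.+1 -> 'I_n.+1 -> nat) (q : 'I_n.+1).
Hypotheses (Hloop : loopless m) (Hconn : connected_mg m).

Local Notation Qq := (reduced_laplacian m q).

Definition ext0 (y : 'cV[rat]_n) : 'cV[rat]_n.+1 :=
  \col_i oapp (fun j => y j 0) 0 (unlift q i).

Lemma ext0_lift (y : 'cV[rat]_n) j : ext0 y (lift q j) 0 = y j 0.
Proof. by rewrite mxE liftK. Qed.

Lemma ext0_q (y : 'cV[rat]_n) : ext0 y q 0 = 0.
Proof. by rewrite mxE unlift_none. Qed.

Lemma laplacian_ext0 (y : 'cV[rat]_n) j :
  (laplacianR m *m ext0 y) (lift q j) 0 = (Qq *m y) j 0.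
Proof.
rewrite !mxE (bigD1_ord q) //= ext0_q mulr0 add0r.
by apply: eq_bigr => k _; rewrite ext0_lift !mxE.
Qed.

(* The reduced Laplacian is invertible: a kernel vector y extends by zero to
   a vector harmonic off q, which vanishes by the maximum principle. *)
Lemma reduced_laplacian_unit : Qq \in unitmx.
Proof.
rewrite unitmxE unitfE -det_tr; apply/negP => /det0P [v v_neq0 vQ].
have Qy : Qq *m v^T = 0 by rewrite -[Qq]trmxK -trmx_mul vQ trmx0.
have ext0_eq0 : ext0 v^T = 0.
  apply: (harmonic_eq0 Hloop Hconn (ext0_q _)) => w.
  case: (unliftP q w) => [j ->|->]; last by rewrite eqxx.
  by rewrite /harmonic_at laplacian_ext0 Qy mxE.
move/eqP: v_neq0; apply; apply/matrixP => i j; rewrite (ord1 i).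
by move: (ext0_lift v^T j); rewrite ext0_eq0 !mxE => <-.
Qed.

Lemma Lq_mulE (x : 'cV[rat]_n.+1) : Lq m q *m x = ext0 (invmx Qq *m row' q x).
Proof.
apply/matrixP => i k; rewrite (ord1 k) !mxE (bigD1_ord q) //=.
case: (unliftP q i) => [j ->|->]; rewrite !mxE ?liftK unlift_none mul0r add0r /=.
  by rewrite mxE; apply: eq_bigr => l _; rewrite !mxE !liftK.
by rewrite big1 // => l _; rewrite !mxE unlift_none mul0r.
Qed.

(* Off q, Q L_(q) is the identity: this is the identity Q L_(q) = I + R. *)
Lemma laplacian_Lq (x : 'cV[rat]_n.+1) v :
  v != q -> (laplacianR m *m (Lq m q *m x)) v 0 = x v 0.
Proof.
case: (unliftP q v) => [j ->|->]; last by rewrite eqxx.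
rewrite Lq_mulE laplacian_ext0 mulmxA mulmxV ?reduced_laplacian_unit //.
by rewrite mul1mx mxE.
Qed.

End ReducedLaplacian.

Definition frac_cV (n : nat) (x : 'cV[rat]_n) : 'cV[rat]_n :=
  x - map_mx (fun z : int => z%:~R) (floor_cV x).

Lemma frac_cV_itv (n : nat) (x : 'cV[rat]_n) k : 0 <= frac_cV x k 0 < 1.
Proof.
have /andP [floor_le lt_floor1] := floor_itv (x k 0).
by rewrite !mxE; rewrite intrD in lt_floor1; apply/andP; split; lra.
Qed.

(* Key identity: off q, D'_v equals (Q z)_v with z the fractional part of
   L_(q) D, because Q (L_(q) D) agrees with D off q. *)
Lemma reduce_div_frac (n : nat) (m : 'I_n.+1 -> 'I_n.+1 -> nat) (q : 'I_n.+1)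
  (Hloop : loopless m) (Hconn : connected_mg m) (D : 'cV[int]_n.+1) v :
  v != q -> (reduce_div m q D v 0)%:~R =
    (laplacianR m *m frac_cV (Lq m q *m map_mx (fun z : int => z%:~R) D)) v 0.
Proof.
move=> v_q; rewrite /frac_cV /reduce_div.
rewrite mulmxBr {2}/laplacianR -map_mxM [RHS]mxE (laplacian_Lq Hloop Hconn _ v_q).
by rewrite !mxE intrB.
Qed.

Theorem mainTheorem11 (n : nat) (m : 'I_n.+1 -> 'I_n.+1 -> nat)
  (Hsym : symmetric_mult m) (Hloop : loopless m) (Hconn : connected_mg m)
  (D : 'cV[int]_n.+1) (q : 'I_n.+1) :
  lin_equiv m (reduce_div m q D) D /\
  (forall v : 'I_n.+1, v != q ->
     `|reduce_div m q D v ord0| < (deg m v)%:Z).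
Proof.
split.
  exists (- floor_cV (Lq m q *m map_mx (fun z : int => z%:~R) D)).
  by rewrite /reduce_div addrAC subrr add0r mulmxN.
move=> v v_q; rewrite -(ltr_int rat) intr_norm (reduce_div_frac Hloop Hconn _ v_q).
apply: laplacianR_norm_lt => //; first exact: frac_cV_itv.
exact: (exists_neighbour Hconn v_q).
Qed.
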